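(* Let $\mathcal H$ be a hypergraph and let $m\ge l+1$ be integers with $l\ge 0$. Suppose the embedded homology satisfies $H_n(\mathcal H)=0$ for all $l\le n\le m$. Then for every $n$ with $l+1\le n\le m$: (i) $H_n(\Delta\mathcal H,\mathcal H)\cong H_n(\Delta\mathcal H)$; (ii) $H_n(\mathcal H,\delta\mathcal H)\cong H_{n-1}(\delta\mathcal H)$; (iii) there is a short exact sequence $$0\to H_n(\Delta\mathcal H)\to H_n(\Delta\mathcal H,\delta\mathcal H)\to H_{n-1}(\delta\mathcal H)\to 0,$$ where $H_n(\Delta\mathcal H,\delta\mathcal H)$ is the usual simplicial relative homology, isomorphic to the reduced homology $\tilde H_n(|\Delta\mathcal H|/|\delta\mathcal H|)$ of the quotient of geometric realizations. Consequently $0\to H_n(\Delta\mathcal H,\mathcal H)\to \tilde H_n(|\Delta\mathcal H|/|\delta\mathcal H|)\to H_n(\mathcal H,\delta\mathcal H)\to 0$ is exact.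
   Context: A hypergraph is a finite set $\mathcal H$ of nonempty finite subsets of a vertex set; elements are hyperedges, an $n$-hyperedge having $n+1$ vertices. The associated simplicial complex is $\Delta\mathcal H=\{\sigma\ne\emptyset:\sigma\subseteq\tau\text{ for some }\tau\in\mathcal H\}$ and the lower-associated simplicial complex is $\delta\mathcal H=\{\sigma\in\mathcal H:\ \text{every nonempty }\tau\subseteq\sigma\text{ lies in }\mathcal H\}$; thus $\delta\mathcal H\subseteq\mathcal H\subseteq\Delta\mathcal H$. Fix an abelian coefficient group $G$; $C_*(\Delta\mathcal H)$ is the simplicial chain complex with coefficients in $G$ and boundary $\partial$, $G(\mathcal H)_n$ the $G$-linear combinations of $n$-hyperedges, $\mathrm{Inf}_n(\mathcal H)=G(\mathcal H)_n\cap\partial_n^{-1}(G(\mathcal H)_{n-1})$. Embedded homology: $H_n(\mathcal H)=H_n(\mathrm{Inf}_*(\mathcal H))$; for $\mathcal A\subseteq\mathcal B$ relative embedded homology $H_n(\mathcal B,\mathcal A)=H_n(\mathrm{Inf}_*(\mathcal B)/\mathrm{Inf}_*(\mathcal A))$. For simplicial complexes these agree with ordinary simplicial (relative) homology with coefficients in $G$. *)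

From HB Require Import structures.
From mathcomp Require Import all_boot all_order all_algebra.
Set Implicit Arguments. Unset Strict Implicit. Unset Printing Implicit Defensive.
Import GRing.Theory.
Local Open Scope ring_scope.

(* Vertices are 'I_N (any finite vertex set, ordered by the natural order on
   'I_N which fixes the orientation of simplices); simplices / hyperedges are
   nonempty subsets of 'I_N; coefficients in an abelian group G : zmodType.  *)
Section Hypergraph.
Variables (N : nat) (G : zmodType).

Definition simplex := {set 'I_N}.

(* A (possibly inhomogeneous) chain: a G-valued function on simplices. *)
Definition chain := {ffun simplex -> G}.

(* Simplicial boundary:  d[v_0..v_k] = \sum_i (-1)^i [v_0.. ^v_i ..v_k],
   v_0 < ... < v_k.  The coefficient of tau = sigma \ {v} is (-1)^#{u in tau | u < v}.
   The (non-augmented) boundary of a vertex is 0. *)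
Definition bd (c : chain) : chain :=
  [ffun t : simplex => if t == set0 then 0 else
     \sum_(v : 'I_N | v \notin t)
        (if odd #|[set u in t | (val u < val v)%N]| then - c (v |: t)
         else c (v |: t))].

Definition deg (n : nat) (c : chain) : Prop :=
  forall s, c s != 0 -> #|s| = n.+1.
Definition supp_in (K : {set simplex}) (c : chain) : Prop :=
  forall s, c s != 0 -> s \in K.

Definition GH (K : {set simplex}) (n : nat) (c : chain) : Prop :=
  deg n c /\ supp_in K c.

Definition Inf (H : {set simplex}) (n : nat) (c : chain) : Prop :=
  GH H n c /\ GH H n.-1 (bd c).

Definition zeroP (n : nat) (c : chain) : Prop := c = 0.

(* n-th homology of the quotient chain complex P/Q (Q a subcomplex of P),
   presented as a subquotient  cycles / boundaries  of the chain group. *)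
Record subquot := SubQuot { sq_cyc : chain -> Prop; sq_bd : chain -> Prop }.

Definition rel_cycles (P Q : nat -> chain -> Prop) (n : nat) (x : chain) : Prop :=
  P n x /\ Q n.-1 (bd x).
Definition rel_bounds (P Q : nat -> chain -> Prop) (n : nat) (x : chain) : Prop :=
  exists y z, P n.+1 y /\ Q n z /\ x = bd y + z.
Definition homol (P Q : nat -> chain -> Prop) (n : nat) : subquot :=
  SubQuot (rel_cycles P Q n) (rel_bounds P Q n).

Definition Hemb (H : {set simplex}) (n : nat) := homol (Inf H) zeroP n.
Definition HembRel (B A : {set simplex}) (n : nat) := homol (Inf B) (Inf A) n.

Definition Hsimp (K : {set simplex}) (n : nat) := homol (GH K) zeroP n.
Definition HsimpRel (K L : {set simplex}) (n : nat) := homol (GH K) (GH L) n.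

Definition Delta (H : {set simplex}) : {set simplex} :=
  [set s : simplex | (s != set0) && [exists t in H, s \subset t]].
Definition delta (H : {set simplex}) : {set simplex} :=
  [set s in H | [forall t : simplex, ((t != set0) && (t \subset s)) ==> (t \in H)]].

(* Group homomorphisms between subquotients Z1/B1 -> Z2/B2, presented by a
   map on representatives that is well defined and additive modulo B2
   (every homomorphism of quotient groups arises this way, by choice). *)
Definition sq_hom (A B : subquot) (f : chain -> chain) : Prop :=
  [/\ forall x, sq_cyc A x -> sq_cyc B (f x),
      forall x y, sq_cyc A x -> sq_cyc A y -> sq_bd A (x - y) ->
                  sq_bd B (f x - f y) &
      forall x y, sq_cyc A x -> sq_cyc A y -> sq_bd B (f (x + y) - (f x + f y))].
Definition sq_inj (A B : subquot) (f : chain -> chain) : Prop :=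
  forall x y, sq_cyc A x -> sq_cyc A y -> sq_bd B (f x - f y) -> sq_bd A (x - y).
Definition sq_surj (A B : subquot) (f : chain -> chain) : Prop :=
  forall w, sq_cyc B w -> exists2 x, sq_cyc A x & sq_bd B (w - f x).

Definition sq_iso (A B : subquot) : Prop :=
  exists f, [/\ sq_hom A B f, sq_inj A B f & sq_surj A B f].

Definition sq_ses (A B C : subquot) : Prop :=
  exists f g, [/\ sq_hom A B f /\ sq_hom B C g, sq_inj A B f, sq_surj B C g,
    (forall x, sq_cyc A x -> sq_bd C (g (f x))) &
    (forall y, sq_cyc B y -> sq_bd C (g y) ->
       exists2 x, sq_cyc A x & sq_bd B (y - f x))].

Definition sq_trivial (A : subquot) : Prop := forall x, sq_cyc A x -> sq_bd A x.

End Hypergraph.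

From HB Require Import structures.
From mathcomp Require Import all_boot all_order all_algebra.
Set Implicit Arguments. Unset Strict Implicit. Unset Printing Implicit Defensive.
Import GRing.Theory.
From Stdlib Require Import ClassicalEpsilon.
Local Open Scope ring_scope.

(* For the hypergraph, the vanishing of [H_(n+1)(H)] and [H_n(H)] says that
   embedded cycles of these degrees bound embedded chains.  Together with
   [G(delta H) <= Inf(H) <= G(Delta H)] this gives, in degree [n+1]:
   (i) the inclusion [H(Delta H) -> H(Delta H, H)] is an isomorphism;
   (ii) the connecting map [H(H, delta H) -> H_n(delta H)] is an isomorphism;
   (iii) [0 -> H(Delta H) -> H(Delta H, delta H) -> H_n(delta H) -> 0] is exact;
   (iv) the second short exact sequence is (iii) transported along (i), (ii). *)

(* The
   sum is split along a total order (here [enum_rank]) rather than argued as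
   [S = - S], which would not suffice in the presence of 2-torsion. *)
Lemma alternating_double_sum (V : zmodType) (I : finType) (F : I -> I -> V) :
  (forall v, F v v = 0) -> (forall v w, F w v = - F v w) ->
  \sum_v \sum_w F v w = 0.
Proof.
move=> F0 Falt; pose r := @enum_rank I.
have split_vw v w : F v w = (if (r v < r w)%N then F v w else 0)
                          + (if (r w < r v)%N then F v w else 0).
  by case: ltngtP => [||/val_inj/enum_rank_inj ->]; rewrite ?addr0 ?add0r ?F0.
under eq_bigr => v _ do under eq_bigr => w _ do rewrite split_vw.
under eq_bigr => v _ do rewrite big_split.
rewrite big_split /= [X in _ + X]exchange_big /=.
apply/eqP; rewrite addr_eq0 -sumrN; apply/eqP; apply: eq_bigr => v _.
by rewrite -sumrN; apply: eq_bigr => w _; rewrite Falt; case: ifP; rewrite ?oppr0.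
Qed.

Section Boundary.
Context {N : nat} {G : zmodType}.
Local Notation chain := (chain N G).
Local Notation simplex := (simplex N).

Definition signed (b : bool) (x : G) : G := if b then - x else x.

Lemma signed_sum b (I : finType) (P : pred I) (F : I -> G) :
  signed b (\sum_(i | P i) F i) = \sum_(i | P i) signed b (F i).
Proof. by case: b; rewrite /signed ?sumrN. Qed.

Lemma signedB b x y : signed b (x - y) = signed b x - signed b y.
Proof. by case: b; rewrite /signed ?opprD. Qed.

Lemma signed_signed a b x : signed a (signed b x) = signed (a (+) b) x.
Proof. by case: a; case: b; rewrite /signed ?opprK. Qed.

Lemma signedN b x : signed (~~ b) x = - signed b x.
Proof. by case: b; rewrite /signed ?opprK. Qed.

Definition below_odd (t : simplex) (v : 'I_N) : bool :=
  odd #|[set u in t | (val u < val v)%N]|.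

Lemma below_odd_U1 (t : simplex) v w : v \notin t ->
  below_odd (v |: t) w = (val v < val w)%N (+) below_odd t w.
Proof.
move=> vt; rewrite /below_odd; case: ltnP => [vw|wv] /=.
  rewrite (_ : [set u in v |: t | _] = v |: [set u in t | (val u < val w)%N]).
    by rewrite cardsU1 inE (negbTE vt).
  by apply/setP => u; rewrite !inE; case: eqVneq => [->|].
rewrite (_ : [set u in v |: t | _] = [set u in t | (val u < val w)%N]) //.
by apply/setP => u; rewrite !inE; case: eqVneq => [->|] //=; rewrite ltnNge wv andbF.
Qed.

Lemma bdE (c : chain) t : bd c t =
  if t == set0 then 0 else \sum_(v | v \notin t) signed (below_odd t v) (c (v |: t)).
Proof. by rewrite ffunE. Qed.

Lemma bdB : {morph (@bd N G) : x y / x - y}.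
Proof.
move=> x y; apply/ffunP => t; rewrite !bdE !ffunE; case: ifP => _; first by rewrite subr0.
by rewrite -sumrB; apply: eq_bigr => v _; rewrite !ffunE signedB.
Qed.

Lemma setU1_neq0 (v : 'I_N) (t : simplex) : v |: t != set0.
Proof. by apply/set0Pn; exists v; rewrite setU11. Qed.

Lemma bdbd (c : chain) : bd (bd c) = 0.
Proof.
apply/ffunP => t; rewrite bdE ffunE; case: ifP => // t_nz.
pose F v w := if [&& v \notin t, w \notin t & w != v] then
  signed (below_odd t v (+) below_odd t w (+) (val v < val w)%N) (c (w |: (v |: t)))
  else 0.
transitivity (\sum_v \sum_w F v w); last first.
  apply: alternating_double_sum => [v|v w]; first by rewrite /F eqxx !andbF.
  rewrite /F [w |: (v |: t)]setUCA andbCA [v == w]eq_sym.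
  case: eqVneq => [->|vw]; rewrite ?andbF ?oppr0 //=; case: ifP; rewrite ?oppr0 // => _.
  have -> : (val w < val v)%N = ~~ (val v < val w)%N.
    by case: ltngtP => // /val_inj vwE; rewrite vwE eqxx in vw.
  by rewrite -signedN addbN [below_odd t w (+) _]addbC.
rewrite big_mkcond; apply: eq_bigr => v _ /=; rewrite /F.
case: (boolP (v \in t)) => [|vt] /=; first by rewrite big1.
rewrite bdE (negbTE (setU1_neq0 _ _)) signed_sum big_mkcond; apply: eq_bigr => w _.
rewrite in_setU1 negb_or andbC; case: ifP => //= _.
by rewrite signed_signed below_odd_U1 // addbA addbAC.
Qed.

End Boundary.

HB.instance Definition _ (N : nat) (G : zmodType) :=
  GRing.isZmodMorphism.Build (chain N G) (chain N G) (@bd N G) (@bdB N G).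

Section BoundaryAdditive.
Context {N : nat} {G : zmodType}.

Lemma bd0 : bd (0 : chain N G) = 0.
Proof. exact: raddf0. Qed.

Lemma bdD : {morph (@bd N G) : x y / x + y}.
Proof. exact: raddfD. Qed.

End BoundaryAdditive.

Section Chains.
Context {N : nat} {G : zmodType}.
Local Notation chain := (chain N G).
Local Notation simplex := (simplex N).

Definition dclosed (K : {set simplex}) : Prop :=
  forall s t : simplex, s \in K -> t \subset s -> t != set0 -> t \in K.

Lemma bd_supp (c : chain) t : bd c t != 0 ->
  t != set0 /\ exists2 v, v \notin t & c (v |: t) != 0.
Proof.
rewrite bdE; case: ifP => [_|t_nz bct]; first by rewrite eqxx.
split; first by apply/negbT.
apply/exists_inP; apply: contraNT bct; rewrite negb_exists_in => /forall_inP c0.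
by rewrite big1 // => v /c0 /negbNE /eqP ->; case: below_odd; rewrite /signed ?oppr0.
Qed.

Lemma support_closedB (Q : simplex -> Prop) (x y : chain) :
  (forall s, x s != 0 -> Q s) -> (forall s, y s != 0 -> Q s) ->
  forall s, (x - y) s != 0 -> Q s.
Proof.
move=> Qx Qy s; rewrite !ffunE.
case: (eqVneq (x s) 0) => [->|/Qx//]; case: (eqVneq (y s) 0) => [->|/Qy//].
by rewrite subrr eqxx.
Qed.

Lemma GH0 K n : GH K n (0 : chain).
Proof. by split=> s; rewrite ffunE eqxx. Qed.

Lemma GHB K n (x y : chain) : GH K n x -> GH K n y -> GH K n (x - y).
Proof. by move=> [dx sx] [dy sy]; split; apply: support_closedB. Qed.

Lemma GH_bd K n (x : chain) : dclosed K -> GH K n x -> GH K n.-1 (bd x).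
Proof.
move=> dK [dx sx]; split=> t /bd_supp [t_nz [v vt cvt]].
  have := dx _ cvt; rewrite cardsU1 vt add1n => -[<-].
  by rewrite prednK // card_gt0.
by apply: dK (sx _ cvt) (subsetUr _ _) t_nz.
Qed.

Lemma GH_Inf K n (x : chain) : dclosed K -> GH K n x -> Inf K n x.
Proof. by move=> dK gx; split=> //; apply: GH_bd. Qed.

Lemma GH_sub (K K' : {set simplex}) n (c : chain) :
  (forall s, s \in K -> s != set0 -> s \in K') -> GH K n c -> GH K' n c.
Proof.
move=> KK' [dc sc]; split=> // s cs; apply: KK' (sc s cs) _.
by rewrite -card_gt0 (dc s cs).
Qed.

Lemma Inf_sub (K K' : {set simplex}) n (c : chain) :
  (forall s, s \in K -> s != set0 -> s \in K') -> Inf K n c -> Inf K' n c.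
Proof. by move=> KK' [??]; split; apply: GH_sub KK' _. Qed.

Definition subcomplex (P : nat -> chain -> Prop) : Prop := forall n,
  [/\ P n 0, (forall x y, P n x -> P n y -> P n (x - y)) &
      (forall x, P n x -> P n.-1 (bd x))].

Definition included (P Q : nat -> chain -> Prop) : Prop := forall n x, P n x -> Q n x.

Lemma subcomplexD P n x y : subcomplex P -> P n x -> P n y -> P n (x + y).
Proof.
move=> cP px py; have [p0 pB _] := cP n.
by have := pB _ _ px (pB _ _ p0 py); rewrite sub0r opprK.
Qed.

Lemma zeroP_subcomplex : subcomplex (@zeroP N G).
Proof. by split=> // [x y -> ->|x ->]; rewrite ?subrr ?bd0. Qed.

Lemma GH_subcomplex K : dclosed K -> subcomplex (GH K).
Proof. by move=> dK n; split=> [|x y|x]; [apply: GH0 | apply: GHB | apply: GH_bd]. Qed.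

Lemma Inf_subcomplex K : subcomplex (Inf K).
Proof.
move=> n; split=> [|x y [gx bx] [gy byy]|x [_ bx]].
- by split; rewrite ?bd0; apply: GH0.
- by split; rewrite ?bdB; apply: GHB.
- by split; rewrite ?bdbd //; apply: GH0.
Qed.

End Chains.

Section Subquotients.
Context {N : nat} {G : zmodType}.
Local Notation chain := (chain N G).
Local Notation subquot := (subquot N G).
Implicit Types (A B C : subquot) (P Q : nat -> chain -> Prop).

Record wf_subquot A : Prop := WfSubquot {
  wf_cyc0 : sq_cyc A 0;
  wf_cycB : forall x y, sq_cyc A x -> sq_cyc A y -> sq_cyc A (x - y);
  wf_bd0 : sq_bd A 0;
  wf_bdB : forall x y, sq_bd A x -> sq_bd A y -> sq_bd A (x - y);
  wf_bd_cyc : forall x, sq_bd A x -> sq_cyc A x }.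

Lemma homol_wf P Q n : subcomplex P -> subcomplex Q -> included Q P ->
  wf_subquot (homol P Q n).
Proof.
move=> cP cQ QP; have [P0 PB Pbd] := cP n; have [Q0 QB Qbd] := cQ n.-1.
have [P0' PB' Pbd'] := cP n.+1; have [Q0' QB' Qbd'] := cQ n.
split=> /=; rewrite /rel_cycles /rel_bounds.
- by rewrite bd0.
- by move=> x y [px qx] [py qy]; rewrite bdB; split; [apply: PB | apply: QB].
- by exists 0, 0; rewrite bd0 addr0.
- move=> _ _ [y1 [z1 [p1 [q1 ->]]]] [y2 [z2 [p2 [q2 ->]]]].
  exists (y1 - y2), (z1 - z2); rewrite bdB opprD addrACA.
  by split; [apply: PB' | split; [apply: QB' |]].
- move=> _ [y [z [py [qz ->]]]]; rewrite bdD bdbd add0r.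
  by split; [apply: subcomplexD (Pbd' _ py) (QP _ _ qz) | apply: Qbd'].
Qed.

Lemma incl_hom P Q P' Q' n : subcomplex P' -> subcomplex Q' ->
  included P P' -> included Q Q' -> sq_hom (homol P Q n) (homol P' Q' n) id.
Proof.
move=> cP' cQ' PP' QQ'; have [P0 _ _] := cP' n.+1; have [Q0 _ _] := cQ' n.
split=> /= [x [px qx]|x y _ _ [w [z [pw [qz e]]]]|x y _ _].
- by split; [apply: PP' | apply: QQ'].
- by exists w, z; split; [apply: PP' | split; [apply: QQ' |]].
- by exists 0, 0; rewrite bd0 addr0 subrr.
Qed.

Lemma connecting_hom P Q Q' n : subcomplex Q' -> included Q Q' ->
  sq_hom (homol P Q n.+1) (homol Q' (@zeroP N G) n) (@bd N G).
Proof.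
move=> cQ' QQ'; have [Q0 _ _] := cQ' n.+1.
split=> /= [x [_ qx]|x y _ _ [w [z [_ [qz e]]]]|x y _ _].
- by split; [apply: QQ' | apply: bdbd].
- exists z, 0; split; [exact: QQ' | split=> //].
  by rewrite addr0 -bdB e bdD bdbd add0r.
- by exists 0, 0; rewrite bdD !bd0 addr0 subrr.
Qed.

Local Notation sq_eqv A a b := (sq_bd A (a - b)).

Section WellFormed.
Variables (A : subquot) (wfA : wf_subquot A).

Lemma sq_bdD a b : sq_bd A a -> sq_bd A b -> sq_bd A (a + b).
Proof.
move=> ha hb; have := wf_bdB wfA ha (wf_bdB wfA (wf_bd0 wfA) hb).
by rewrite sub0r opprK.
Qed.

Lemma sq_cycD a b : sq_cyc A a -> sq_cyc A b -> sq_cyc A (a + b).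
Proof.
move=> ha hb; have := wf_cycB wfA ha (wf_cycB wfA (wf_cyc0 wfA) hb).
by rewrite sub0r opprK.
Qed.

Lemma sq_eqv_sym a b : sq_eqv A a b -> sq_eqv A b a.
Proof. by move=> h; have := wf_bdB wfA (wf_bd0 wfA) h; rewrite sub0r opprB. Qed.

Lemma sq_eqv_trans a b c : sq_eqv A a b -> sq_eqv A b c -> sq_eqv A a c.
Proof. by move=> h1 h2; have := sq_bdD h1 h2; rewrite addrA subrK. Qed.

Lemma sq_eqvD a b c d : sq_eqv A a b -> sq_eqv A c d -> sq_eqv A (a + c) (b + d).
Proof. by move=> h1 h2; have := sq_bdD h1 h2; rewrite opprD addrACA. Qed.

End WellFormed.

Lemma hom_bd A B f : wf_subquot A -> wf_subquot B -> sq_hom A B f ->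
  forall x, sq_bd A x -> sq_bd B (f x).
Proof.
move=> wfA wfB [fc fh fa] x bx.
have f0 : sq_bd B (f 0).
  have := fa 0 0 (wf_cyc0 wfA) (wf_cyc0 wfA); rewrite addr0 opprD addrA subrr sub0r.
  by move=> h; have := wf_bdB wfB (wf_bd0 wfB) h; rewrite sub0r opprK.
have := fh x 0 (wf_bd_cyc wfA bx) (wf_cyc0 wfA); rewrite subr0 => /(_ bx) hx.
by have := sq_bdD wfB hx f0; rewrite subrK.
Qed.

Lemma hom_comp A B C f g : wf_subquot A -> wf_subquot B -> wf_subquot C ->
  sq_hom A B f -> sq_hom B C g -> sq_hom A C (fun x => g (f x)).
Proof.
move=> wfA wfB wfC [fc fh fa] [gc gh ga]; split=> /= [x /fc /gc //|x y cx cy e|x y cx cy].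
  by apply: gh; [apply: fc | apply: fc | apply: fh].
have cxy := sq_cycD wfA cx cy; have [cfx cfy] := (fc _ cx, fc _ cy).
have e := gh _ _ (fc _ cxy) (sq_cycD wfB cfx cfy) (fa _ _ cx cy).
exact: (sq_eqv_trans wfC e (ga _ _ cfx cfy)).
Qed.

Lemma iso_sym A B : wf_subquot A -> wf_subquot B -> sq_iso A B -> sq_iso B A.
Proof.
move=> wfA wfB [f [[fc fh fa] fi fs]].
pose g w := epsilon (inhabits (0 : chain)) (fun x => sq_cyc A x /\ sq_eqv B w (f x)).
have gP w : sq_cyc B w -> sq_cyc A (g w) /\ sq_eqv B w (f (g w)).
  move=> cw; have [x cx e] := fs w cw.
  by apply: (epsilon_spec _ (fun x => sq_cyc A x /\ sq_eqv B w (f x))); exists x.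
exists g; split; first split.
- by move=> w /gP [].
- move=> w1 w2 c1 c2 e; have [a1 e1] := gP _ c1; have [a2 e2] := gP _ c2.
  apply: fi => //; apply: (sq_eqv_trans wfB (sq_eqv_sym wfB e1)).
  exact: (sq_eqv_trans wfB e e2).
- move=> w1 w2 c1 c2; have [a1 e1] := gP _ c1; have [a2 e2] := gP _ c2.
  have [a12 e12] := gP _ (sq_cycD wfB c1 c2).
  apply: fi => //; first exact: sq_cycD.
  apply: (sq_eqv_trans wfB (sq_eqv_sym wfB e12)).
  apply: (sq_eqv_trans wfB (sq_eqvD wfB e1 e2)).
  exact: (sq_eqv_sym wfB (fa _ _ a1 a2)).
- move=> w1 w2 c1 c2 e; have [a1 e1] := gP _ c1; have [a2 e2] := gP _ c2.
  apply: (sq_eqv_trans wfB e1); apply: (sq_eqv_trans wfB (fh _ _ a1 a2 e)).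
  exact: sq_eqv_sym.
- move=> x cx; exists (f x); first exact: fc.
  by have [a e] := gP _ (fc _ cx); apply: fi => //; apply: sq_eqv_sym.
Qed.

Lemma ses_iso A' A B C C' :
  wf_subquot A' -> wf_subquot A -> wf_subquot B -> wf_subquot C -> wf_subquot C' ->
  sq_iso A' A -> sq_ses A B C -> sq_iso C C' -> sq_ses A' B C'.
Proof.
move=> wfA' wfA wfB wfC wfC' [a [ah ai as_]] [f [g [[fh gh] fi gs ex1 ex2]]]
  [c [ch ci cs]].
case: (ah) => ac _ _; case: (fh) => _ fhh _; case: (gh) => gc _ _; case: (ch) => _ chh _.
exists (fun x => f (a x)), (fun y => c (g y)); split.
- by split; [apply: hom_comp ah fh | apply: hom_comp gh ch].
- by move=> x y cx cy e; apply: ai => //; apply: fi (ac _ cx) (ac _ cy) e.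
- move=> w cw; have [z cz e1] := cs w cw; have [y cy e2] := gs z cz.
  by exists y => //; apply: (sq_eqv_trans wfC' e1); apply: chh => //; apply: gc.
- by move=> x cx; apply: (hom_bd wfC wfC' ch); apply: ex1 (ac _ cx).
- move=> y cy e; have gyC : sq_bd C (g y).
    have c0 := hom_bd wfC wfC' ch (wf_bd0 wfC).
    have := ci (g y) 0 (gc _ cy) (wf_cyc0 wfC); rewrite subr0; apply.
    exact: (wf_bdB wfC' e c0).
  have [x cx ex] := ex2 y cy gyC; have [x' cx' ex'] := as_ x cx.
  by exists x' => //; apply: (sq_eqv_trans wfB ex); apply: fhh => //; apply: ac.
Qed.

End Subquotients.

Section HomologyGroups.
Variables (N : nat) (G : zmodType).
Local Notation chain := (chain N G).
Implicit Types K L : {set {set 'I_N}}.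

Lemma wf_Hsimp K n : dclosed K -> wf_subquot (Hsimp G K n).
Proof.
move=> dK; apply: (homol_wf _ (GH_subcomplex dK) (@zeroP_subcomplex N G)).
by move=> k x ->; apply: GH0.
Qed.

Lemma wf_HsimpRel K L n : dclosed K -> dclosed L ->
  (forall s, s \in L -> s != set0 -> s \in K) -> wf_subquot (HsimpRel G K L n).
Proof.
move=> dK dL LK; apply: (homol_wf _ (GH_subcomplex dK) (GH_subcomplex dL)).
by move=> k x; apply: GH_sub LK.
Qed.

Lemma wf_HembRel K L n :
  (forall s, s \in L -> s != set0 -> s \in K) -> wf_subquot (HembRel G K L n).
Proof.
move=> LK; apply: (homol_wf _ (@Inf_subcomplex N G K) (@Inf_subcomplex N G L)).
by move=> k x; apply: Inf_sub LK.
Qed.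

Lemma pair_exact_middle K L n (y : chain) :
  (forall s, s \in L -> s != set0 -> s \in K) ->
  sq_cyc (HsimpRel G K L n.+1) y -> sq_bd (Hsimp G L n) (bd y) ->
  exists2 x, sq_cyc (Hsimp G K n.+1) x & sq_bd (HsimpRel G K L n.+1) (y - x).
Proof.
move=> LK [gy _] [w [z [gw [z0 e]]]]; exists (y - w).
  split; last by rewrite /zeroP bdB e z0 addr0 subrr.
  by apply: GHB gy (GH_sub LK gw).
exists 0, w; split; first exact: GH0.
by rewrite bd0 add0r opprB addrC subrK.
Qed.

End HomologyGroups.

Section Hypergraph.
Variables (N : nat) (G : zmodType) (H : {set {set 'I_N}}).
Local Notation chain := (chain N G).

Lemma Delta_dclosed : dclosed (Delta H).
Proof.
move=> s t; rewrite !inE => /andP[_ /exists_inP[u uH su]] ts t_nz.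
by rewrite t_nz; apply/exists_inP; exists u => //; apply: subset_trans ts su.
Qed.

Lemma delta_dclosed : dclosed (delta H).
Proof.
move=> s t; rewrite !inE => /andP[_ /forallP sub_s] ts t_nz.
have -> /= : t \in H by apply: (implyP (sub_s t)); rewrite t_nz ts.
apply/forallP => u; apply/implyP => /andP[u_nz ut].
by apply: (implyP (sub_s u)); rewrite u_nz (subset_trans ut ts).
Qed.

Lemma delta_sub_H s : s \in delta H -> s != set0 -> s \in H.
Proof. by rewrite inE => /andP[]. Qed.

Lemma H_sub_Delta s : s \in H -> s != set0 -> s \in Delta H.
Proof. by move=> sH s_nz; rewrite inE s_nz; apply/exists_inP; exists s. Qed.

Lemma delta_sub_Delta s : s \in delta H -> s != set0 -> s \in Delta H.
Proof. by move=> sd s_nz; apply: H_sub_Delta (delta_sub_H sd s_nz) s_nz. Qed.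

Lemma GH_delta_Inf n (x : chain) : GH (delta H) n x -> Inf H n x.
Proof. by move=> gx; apply: Inf_sub delta_sub_H (GH_Inf delta_dclosed gx). Qed.

Lemma Inf_GH_Delta n (x : chain) : Inf H n x -> GH (Delta H) n x.
Proof. by case=> gx _; apply: GH_sub H_sub_Delta gx. Qed.

Lemma Hemb_fill k (x : chain) : sq_trivial (Hemb G H k) -> Inf H k x -> bd x = 0 ->
  exists2 u, Inf H k.+1 u & x = bd u.
Proof.
move=> Hk0 ix bx; have [u [z [iu [z0 ->]]]] := Hk0 x (conj ix bx).
by exists u; rewrite // z0 addr0.
Qed.

Section Vanishing.
Variable n : nat.
Hypothesis Hn1_0 : sq_trivial (Hemb G H n.+1).
Hypothesis Hn_0 : sq_trivial (Hemb G H n).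

Lemma Hsimp_Delta_inj P Q : included P (GH (Delta H)) -> included Q (Inf H) ->
  sq_inj (Hsimp G (Delta H) n.+1) (homol P Q n.+1) id.
Proof.
move=> PD QH x y [gx bx] [gy byy] [w [z [pw [qz e]]]].
have bz : bd z = 0.
  by rewrite (_ : z = x - y - bd w) ?bdB ?bdbd ?bx ?byy ?subrr // e addrC addKr.
have [u iu zu] := Hemb_fill Hn1_0 (QH _ _ qz) bz.
exists (w + u), 0; split; last by rewrite e zu bdD addr0.
exact: subcomplexD (GH_subcomplex Delta_dclosed) (PD _ _ pw) (Inf_GH_Delta iu).
Qed.

Lemma bd_delta_surj P Q : included (Inf H) P -> included (GH (delta H)) Q ->
  sq_surj (homol P Q n.+1) (Hsimp G (delta H) n) (@bd N G).
Proof.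
move=> HP dQ w [gw bw]; have [u iu wu] := Hemb_fill Hn_0 (GH_delta_Inf gw) bw.
exists u; first by split; [apply: HP | rewrite -wu; apply: dQ].
by exists 0, 0; rewrite wu bd0 subrr addr0; split=> //; apply: GH0.
Qed.

Lemma Hsimp_Delta_iso_HembRel :
  sq_iso (Hsimp G (Delta H) n.+1) (HembRel G (Delta H) H n.+1).
Proof.
exists id; split.
- apply: incl_hom (@Inf_subcomplex N G _) (@Inf_subcomplex N G _) _ _.
    by move=> k x; apply: GH_Inf Delta_dclosed.
  by move=> k x ->; have [] := @Inf_subcomplex N G H k.
- by apply: Hsimp_Delta_inj => k x [].
- move=> w [iw bw]; have [u iu wu] := Hemb_fill Hn_0 bw (bdbd w).
  exists (w - u).
    by split; [apply: GHB (Inf_GH_Delta iu); case: iw | rewrite bdB wu subrr].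
  exists 0, u; split; first by have [] := @Inf_subcomplex N G (Delta H) n.+2.
  by rewrite bd0 add0r opprB addrC subrK.
Qed.

Lemma HembRel_Delta_iso :
  sq_iso (HembRel G (Delta H) H n.+1) (Hsimp G (Delta H) n.+1).
Proof.
exact: iso_sym (wf_Hsimp G n.+1 Delta_dclosed) (wf_HembRel G n.+1 H_sub_Delta)
  Hsimp_Delta_iso_HembRel.
Qed.

Lemma HembRel_delta_iso :
  sq_iso (HembRel G H (delta H) n.+1) (Hsimp G (delta H) n).
Proof.
exists (@bd N G); split.
- by apply: connecting_hom (GH_subcomplex delta_dclosed) _ => k x [].
- move=> x y [ix _] [iy _] [w [z [gw [z0 e]]]].
  have iq : Inf H n.+1 (x - y - w).
    have [_ InfB _] := @Inf_subcomplex N G H n.+1.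
    exact: InfB (InfB _ _ ix iy) (GH_delta_Inf gw).
  have bq : bd (x - y - w) = 0 by rewrite !bdB e z0 addr0 subrr.
  have [u iu qu] := Hemb_fill Hn1_0 iq bq.
  exists u, w; split=> //; split; first exact: GH_Inf delta_dclosed gw.
  by rewrite -qu subrK.
- exact: (bd_delta_surj (fun k x ix => ix) (fun k x => GH_Inf delta_dclosed)).
Qed.

Lemma Delta_delta_ses :
  sq_ses (Hsimp G (Delta H) n.+1) (HsimpRel G (Delta H) (delta H) n.+1)
         (Hsimp G (delta H) n).
Proof.
have cD := GH_subcomplex (G := G) Delta_dclosed.
have cd := GH_subcomplex (G := G) delta_dclosed.
exists id, (@bd N G); split.
- split; first by apply: incl_hom cD cd _ _ => // k x ->; apply: GH0.
  exact: connecting_hom cd _.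
- by apply: Hsimp_Delta_inj => // k x /GH_delta_Inf.
- by apply: bd_delta_surj => // k x /Inf_GH_Delta.
- move=> x [_ bx]; exists 0, 0; split; first exact: GH0.
  by rewrite /= bx bd0 addr0.
- by move=> y; apply: pair_exact_middle delta_sub_Delta.
Qed.

Lemma HembRel_ses :
  sq_ses (HembRel G (Delta H) H n.+1) (HsimpRel G (Delta H) (delta H) n.+1)
         (HembRel G H (delta H) n.+1).
Proof.
have wf_delta_n := wf_Hsimp G n delta_dclosed.
have wf_rel_delta := wf_HembRel G n.+1 delta_sub_H.
apply: ses_iso HembRel_Delta_iso Delta_delta_ses
  (iso_sym wf_rel_delta wf_delta_n HembRel_delta_iso).
- exact: (wf_HembRel G n.+1 H_sub_Delta).
- exact: (wf_Hsimp G n.+1 Delta_dclosed).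
- exact: (wf_HsimpRel G n.+1 Delta_dclosed delta_dclosed delta_sub_Delta).
- exact: wf_delta_n.
- exact: wf_rel_delta.
Qed.

End Vanishing.
End Hypergraph.

Local Close Scope ring_scope.

Theorem mainTheorem6 (N : nat) (G : zmodType) (H : {set {set 'I_N}}) (l m : nat) :
  set0 \notin H ->
  (l.+1 <= m)%N ->
  (forall n, (l <= n <= m)%N -> sq_trivial (Hemb G H n)) ->
  forall n, (l.+1 <= n <= m)%N ->
    [/\ sq_iso (HembRel G (Delta H) H n) (Hsimp G (Delta H) n),
        sq_iso (HembRel G H (delta H) n) (Hsimp G (delta H) n.-1),
        sq_ses (Hsimp G (Delta H) n) (HsimpRel G (Delta H) (delta H) n)
               (Hsimp G (delta H) n.-1) &
        sq_ses (HembRel G (Delta H) H n) (HsimpRel G (Delta H) (delta H) n)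
               (HembRel G H (delta H) n)].
Proof.
move=> _ _ vanish [//|n] /andP[ln nm].
have Hn1_0 : sq_trivial (Hemb G H n.+1) by apply: vanish; rewrite nm andbT ltnW.
have Hn_0 : sq_trivial (Hemb G H n) by apply: vanish; rewrite -ltnS ln ltnW.
split; [exact: HembRel_Delta_iso | exact: HembRel_delta_iso |
        exact: Delta_delta_ses | exact: HembRel_ses].
Qed.
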